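(* Let $c\ge\lceil(2n-1)/3\rceil$ and let $\mathbf{s}_n\in\mathcal{B}(n,c,d_1)$ with $d_1=n-c$ and $add(\mathbf{s}_n)=t_1$. If there exists an integer $0<b<n$ such that $R^b(\mathbf{s}_n)\in\mathcal{B}(n,c,d_2)$ and $add(R^b(\mathbf{s}_n))=t_2\ge t_1$, then $b=d_2$.
   Context: All sequences are binary (entries in $\mathbb{Z}_2$), $\overline{x}=x\oplus1$, $x\bmod d$ is the least nonnegative residue, and $\mathbf{a}^q$ is the concatenation of $q$ copies of $\mathbf a$. For $\mathbf{s}_n=(s_0,\dots,s_{n-1})$, $\mathbf{s}_j=(s_0,\dots,s_{j-1})$. A length-$m$ sequence is periodic if it is the concatenation of $m/e$ copies of a length-$e$ sequence for a proper divisor $e$ of $m$, aperiodic otherwise. Right circular shift: $R^k(\mathbf{s}_n)=(s_{n-k},\dots,s_{n-1},s_0,\dots,s_{n-k-1})$. For $c\ge\lfloor n/2\rfloor$ and $1\le d\le\min\{n-c,\lfloor n/2\rfloor\}$, $\mathcal{B}(n,c,d)$ is the set of aperiodic length-$n$ sequences $\mathbf{s}_n$ with $\mathbf{s}_d$ aperiodic and $\mathbf{s}_{c+d}=(s_0,\dots,s_{d-1})^q(s_0,\dots,s_{r-1},\overline{s_r})$, where $q=\lfloor(c+d-1)/d\rfloor$, $r=c+d-1-qd$, and $s_{c+d},\dots,s_{n-1}$ are arbitrary. For $\mathbf{s}_n\in\mathcal{B}(n,c,d)$, $add(\mathbf{s}_n)$ is the integer $t\ge0$ such that $s_{n-1-i}=s_{(d-1-i)\bmod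 d}$ for $0\le i<t$ and $s_{n-1-t}\neq s_{(d-1-t)\bmod d}$. *)

From mathcomp Require Import all_boot all_order all_algebra.
Set Implicit Arguments. Unset Strict Implicit. Unset Printing Implicit Defensive.

Definition at_ (s : seq bool) (i : nat) : bool := nth false s i.

Definition ceildiv (a b : nat) : nat := (a + b - 1) %/ b.

Definition rep (a : seq bool) (q : nat) : seq bool := flatten (nseq q a).

Definition periodic (s : seq bool) : Prop :=
  exists e, [/\ 0 < e, e < size s, e %| size s &
    exists a : seq bool, size a = e /\ s = rep a (size s %/ e)].

Definition aperiodic (s : seq bool) : Prop := ~ periodic s.

(* Right circular shift R^k(s_n) = (s_{n-k},...,s_{n-1},s_0,...,s_{n-k-1}). *)
Definition Rshift (k : nat) (s : seq bool) : seq bool := rotr k s.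

(* membership in B(n,c,d), including the standing parameter constraints
   c >= floor(n/2), 1 <= d <= min(n-c, floor(n/2)). *)
Definition inB (n c d : nat) (s : seq bool) : Prop :=
  let q := (c + d - 1) %/ d in
  let r := c + d - 1 - q * d in
  [/\ n./2 <= c, 1 <= d & d <= minn (n - c) n./2] /\
  [/\ size s = n, aperiodic s, aperiodic (take d s) &
      take (c + d) s = rep (take d s) q ++ (take r s ++ [:: ~~ at_ s r])].

(* add(s_n) = t, with respect to the parameter d of B(n,c,d):
   s_{n-1-i} = s_{(d-1-i) mod d} for 0 <= i < t, and
   s_{n-1-t} <> s_{(d-1-t) mod d}  (index n-1-t must exist, so t < n). *)
Definition modidx (d i : nat) : nat :=
  absz ((d%:Z - 1 - i%:Z) %% d%:Z)%Z.

Definition is_add (s : seq bool) (d t : nat) : Prop :=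
  [/\ t < size s,
      (forall i, i < t -> at_ s (size s - 1 - i) = at_ s (modidx d i)) &
      at_ s (size s - 1 - t) <> at_ s (modidx d t)].

From mathcomp Require Import all_boot all_order all_algebra.
From mathcomp Require Import zify.
Set Implicit Arguments. Unset Strict Implicit. Unset Printing Implicit Defensive.

(* Let D = n - c.  Membership in B(n,c,D) says that s agrees with the D-periodic
   extension A of s_0 ... s_(D-1) everywhere except at its last position n - 1,
   where the bit is flipped.  The rotation u = R^b(s) carries the flip to
   position b - 1, and membership of u in B(n,c,d2) says that u has period d2 on
   [0, L), L = c + d2 - 1, and that this period breaks at L.  The Fine-Wilf
   theorem compares the two descriptions.  If the flip lies after L, u has
   periods D and d2 on [0, L), which rules out the break at L.  If it lies at L,
   u_0 ... u_(L-1) is a window of A with periods D and d2 < D, so A has the proper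
   period gcd(D, d2) and s_0 ... s_(D-1) is periodic.  If it lies before L, the
   parts of u on either side of the flip are shorter than D + d2 - 1, and
   2D <= c + 1 (which is c >= ceil((2n-1)/3)) then forces d2 = D and b = d2. *)

Definition has_period (f : nat -> bool) (p m : nat) : Prop :=
  forall i, i + p < m -> f i = f (i + p).

Lemma has_period_le f p m m' : m' <= m -> has_period f p m -> has_period f p m'.
Proof. by move=> le_m fp i lt_i; apply: fp; lia. Qed.

Lemma has_period_mod f p m i : has_period f p m -> i < m -> f i = f (i %% p).
Proof.
move=> fp; rewrite {1 2}(divn_eq i p) addnC.
elim: (i %/ p) => [|k IHk] lt_i; first by rewrite mul0n addn0.
by rewrite mulSnr addnA -fp -?IHk //; lia.
Qed.

Lemma has_period_eqmod f p m x y : has_period f p m -> x < m -> y < m ->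
  x = y %[mod p] -> f x = f y.
Proof.
by move=> fp lt_x lt_y eq_xy; rewrite (has_period_mod fp) // eq_xy -(has_period_mod fp).
Qed.

Lemma fine_wilf f p q m : 0 < p -> 0 < q -> p + q <= m.+1 ->
  has_period f p m -> has_period f q m -> has_period f (gcdn p q) m.
Proof.
have [N] := ubnP (p + q); elim: N => // N IHN in p q m *.
wlog le_qp : p q / q <= p.
  move=> W lt_pq p_gt0 q_gt0 pq_m fp fq; have [le_qp | lt_pq'] := leqP q p.
    exact: W.
  by rewrite gcdnC; apply: W => //; lia.
move=> lt_pq p_gt0 q_gt0 pq_m fp fq.
have [-> | neq_pq] := eqVneq p q; first by rewrite gcdnn.
have lt_qp : q < p by rewrite ltn_neqAle eq_sym neq_pq.
have fpq : has_period f (p - q) (m - q).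
  move=> i lt_i; rewrite fp; last by lia.
  by rewrite [in RHS]fq; [congr f |]; lia.
have fg : has_period f (gcdn p q) (m - q).
  rewrite -[p](subnK (ltnW lt_qp)) gcdnC gcdnDr gcdnC.
  by apply: IHN => //; [lia | lia | lia | apply: has_period_le fq; lia].
move=> i lt_i; rewrite (has_period_mod fq (leq_ltn_trans (leq_addr _ i) lt_i)).
rewrite (has_period_mod fq lt_i); apply: (has_period_eqmod fg).
- by have := ltn_pmod i q_gt0; lia.
- by have := ltn_pmod (i + gcdn p q) q_gt0; lia.
by rewrite !modn_dvdm ?dvdn_gcdr // modnDr.
Qed.

Lemma size_rep (w : seq bool) q : size (rep w q) = q * size w.
Proof. by elim: q => //= q IHq; rewrite size_cat IHq mulSn. Qed.

Lemma nth_rep (w : seq bool) q i : i < q * size w ->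
  nth false (rep w q) i = nth false w (i %% size w).
Proof.
elim: q i => [|q IHq] i; first by rewrite mul0n.
rewrite mulSn /rep /= nth_cat => lt_i; case: ltnP => [lt_iw | le_wi].
  by rewrite modn_small.
rewrite IHq; last by lia.
by rewrite -{2}(subnK le_wi) modnDr.
Qed.

Lemma nth_rep_take (w : seq bool) q r i : r <= size w -> i < q * size w + r ->
  nth false (rep w q ++ take r w) i = nth false w (i %% size w).
Proof.
move=> le_r lt_i; rewrite nth_cat size_rep; case: ltnP => [|le_i]; first exact: nth_rep.
rewrite nth_take; last by lia.
by rewrite -{2}(subnK le_i) addnC modnMDl modn_small //; lia.
Qed.

Lemma inB_window n c d s : inB n c d s ->
  has_period (at_ s) d (c + d - 1) /\ at_ s (c + d - 1) != at_ s (c - 1).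
Proof.
move=> [[le_c d_gt0 le_d] [size_s _ _]]; rewrite leq_min in le_d.
set w := take d s; have size_w : size w = d by rewrite size_takel //; lia.
set L := c + d - 1; have eqL := divn_eq L d.
rewrite [_ - _ * _](_ : _ = L %% d); last by lia.
have le_r : L %% d <= d := ltnW (ltn_pmod L d_gt0).
rewrite -(take_takel _ le_r) -/w catA => take_s.
have s_mod i : i < L -> at_ s i = at_ s (i %% d).
  move=> lt_i; rewrite /at_ -(nth_take _ (_ : i < c + d)); last by lia.
  rewrite take_s nth_cat size_cat size_rep size_takel size_w; try lia.
  have -> : i < L %/ d * d + L %% d by lia.
  by rewrite nth_rep_take size_w -?eqL ?nth_take ?ltn_mod.
have s_break : at_ s L = ~~ at_ s (L %% d).
  rewrite /at_ -(nth_take _ (_ : L < c + d)); last by lia.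
  rewrite take_s nth_cat size_cat size_rep size_takel size_w; try lia.
  by rewrite -eqL ltnn subnn.
split=> [i lt_i | ]; first by rewrite (s_mod i) ?(s_mod (i + d)) ?modnDr //; lia.
rewrite s_break (s_mod (c - 1)); last by lia.
have -> : L %% d = (c - 1) %% d by rewrite [in LHS](_ : L = c - 1 + d) ?modnDr //; lia.
by case: (at_ s _).
Qed.

Lemma periodic_of_mod (w : seq bool) g : 0 < g -> g < size w -> g %| size w ->
  (forall i, i < size w -> nth false w i = nth false w (i %% g)) -> periodic w.
Proof.
move=> g_gt0 lt_g dvd_g w_mod; exists g; split=> //.
have size_wg : size (take g w) = g by rewrite size_takel // ltnW.
exists (take g w); split=> //; apply: (@eq_from_nth _ false).
  by rewrite size_rep size_wg divnK.
move=> i lt_i; rewrite w_mod // nth_rep; last by rewrite size_wg divnK.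
by rewrite size_wg nth_take // ltn_mod.
Qed.

Lemma at_rotr (s : seq bool) b j : b <= size s -> j < size s ->
  at_ (rotr b s) j = if j < b then at_ s (size s - b + j) else at_ s (j - b).
Proof.
move=> le_b lt_j; rewrite /at_ /rotr /rot nth_cat size_drop subKn //.
by case: ltnP => [lt_jb | le_bj]; [rewrite nth_drop | rewrite nth_take //; lia].
Qed.

Lemma modn_subdvd m k g : k <= m -> g %| k -> (m - k) %% g = m %% g.
Proof.
by move=> le_k /dvdnP [q kE]; rewrite -[in RHS](subnK le_k) kE addnC modnMDl.
Qed.

Lemma subn_dvd_eqmod m p q g : p <= m -> q <= m -> g %| p -> g %| q ->
  m - p = m - q %[mod g].
Proof. by move=> le_p le_q gp gq; rewrite (modn_subdvd le_p gp) (modn_subdvd le_q gq). Qed.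

Lemma periodic_window_extend (B : nat -> bool) D g x m : 0 < D ->
  (forall y, B (y + D) = B y) -> D + g <= m ->
  has_period (fun j => B (x + j)) g m -> forall k, B (k + g) = B k.
Proof.
move=> D_gt0 BD le_m Bg k.
have Beq y z : y = z %[mod D] -> B y = B z.
  by apply: (has_period_eqmod (m := (maxn y z).+1)) => [i _ | |]; rewrite ?BD; lia.
set r := (k + x * D.-1) %% D.
have xr : x + r = k %[mod D].
  by rewrite modnDmr (_ : x + _ = x * D + k) ?modnMDl //; nia.
have lt_r : r < D by rewrite ltn_mod.
have xrg : k + g = x + (r + g) %[mod D].
  by rewrite addnA -[in RHS]modnDml xr modnDml.
by rewrite (Beq _ _ (esym xr)) (Beq _ _ xrg); apply/esym/Bg; lia.
Qed.

(* [f] models R^b(s), where s is [A] with the bit at position n - 1 flipped. *)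
Section FlipInRotation.

Variables (A f : nat -> bool) (c D d b : nat).
Local Notation n := (c + D).
Local Notation L := (c + d - 1).

Hypothesis A_periodic : forall x, A (x + D) = A x.
Hypotheses (d_gt0 : 0 < d) (d_le_D : d <= D) (c_ge : 2 * D <= c + 1).
Hypotheses (b_gt0 : 0 < b) (b_lt_n : b < n).
Hypothesis f_left : forall j, j < b - 1 -> f j = A (n - b + j).
Hypothesis f_flip : f (b - 1) = ~~ A (n - 1).
Hypothesis f_right : forall j, b <= j -> j < n -> f j = A (j - b).
Hypothesis f_period : has_period f d L.
Hypothesis f_break : f L != f (c - 1).

Local Notation f_suffix := (fun j => f (b + j)).

Lemma f_suffixE j : b + j < n -> f (b + j) = A j.
Proof. by move=> lt_j; rewrite f_right ?addKn //; lia. Qed.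

Lemma left_period_D : has_period f D (b - 1).
Proof. by move=> i lt_i; rewrite !f_left ?addnA ?A_periodic //; lia. Qed.

Lemma left_period_d : b - 1 <= L -> has_period f d (b - 1).
Proof. by move=> le_L; apply: has_period_le le_L f_period. Qed.

Lemma right_period_D : has_period f_suffix D (L - b).
Proof. by move=> i lt_i /=; rewrite !f_suffixE ?A_periodic //; lia. Qed.

Lemma right_period_d : has_period f_suffix d (L - b).
Proof. by move=> i lt_i /=; rewrite addnA; apply: f_period; lia. Qed.

Lemma flip_in_window : b - 1 <= L.
Proof.
rewrite leqNgt; apply/negP => lt_L; move/negP: f_break; apply.
have fD : has_period f D L := has_period_le (ltnW lt_L) left_period_D.
have fg : has_period f (gcdn D d) L by apply: fine_wilf fD f_period; lia.
rewrite (_ : f L = f (L - D)); last first.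
  by rewrite !f_left; [rewrite -[in RHS]A_periodic; congr A | |]; lia.
rewrite (_ : c - 1 = L - d); last by lia.
apply/eqP; apply: (has_period_eqmod fg); try lia.
by apply: subn_dvd_eqmod; rewrite ?dvdn_gcdl ?dvdn_gcdr //; lia.
Qed.

Lemma flip_near_start g : b - 1 < L -> g %| D -> g %| d ->
  has_period f g (b - 1) -> b - 1 < D.
Proof.
move=> lt_L gD gd fg; rewrite ltnNge; apply/negP => le_D.
have e1 : f (b - 1 - d) = f (b - 1) by rewrite f_period ?subnK //; lia.
have e2 : f (b - 1 - D) = f (b - 1 - d).
  by apply: (has_period_eqmod fg); [lia | lia | apply: subn_dvd_eqmod => //; lia].
have e3 : f (b - 1 - D) = A (n - 1).
  by rewrite f_left; [rewrite -A_periodic; congr A | ]; lia.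
by have := f_flip; rewrite -e1 -e2 e3; case: (A _).
Qed.

Lemma flip_near_end g : b - 1 < L -> g %| D -> g %| d ->
  has_period f_suffix g (L - b) -> L - b < D.
Proof.
move=> lt_L gD gd fg; rewrite ltnNge; apply/negP => le_D.
have e1 : f L = f_suffix (L - b - D).
  rewrite /= f_suffixE ?f_right; try lia.
  by rewrite -[A (L - b - D)]A_periodic; congr A; lia.
have e2 : f_suffix (L - b - D) = f_suffix (L - b - d).
  by apply: (has_period_eqmod fg); [lia | lia | apply: subn_dvd_eqmod => //; lia].
have e3 : f_suffix (L - b - d) = f (c - 1) by congr f; lia.
by move/negP: f_break; apply; rewrite e1 e2 e3.
Qed.

Lemma flip_left_bound : b - 1 < L -> b - 1 < D + d - 1.
Proof.
move=> lt_L; rewrite ltnNge; apply/negP => le_b.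
have fg : has_period f (gcdn D d) (b - 1).
  by apply: fine_wilf left_period_D (left_period_d (ltnW lt_L)); lia.
by have := flip_near_start lt_L (dvdn_gcdl D d) (dvdn_gcdr D d) fg; lia.
Qed.

Lemma flip_right_bound : b - 1 < L -> L - b < D + d - 1.
Proof.
move=> lt_L; rewrite ltnNge; apply/negP => le_b.
have fg : has_period f_suffix (gcdn D d) (L - b).
  by apply: fine_wilf right_period_D right_period_d; lia.
by have := flip_near_end lt_L (dvdn_gcdl D d) (dvdn_gcdr D d) fg; lia.
Qed.

Lemma flip_inside_window_period_eq : b - 1 < L -> d = D.
Proof.
move=> lt_L; apply/eqP; rewrite eqn_leq d_le_D leqNgt; apply/negP => lt_dD.
have lt_left := flip_left_bound lt_L; have lt_right := flip_right_bound lt_L.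
have A2 y : A (y + D + D) = A y by rewrite !A_periodic.
have left_eq : A (n - 1 - d) = ~~ A (n - 1).
  rewrite -f_flip (_ : n - 1 - d = n - b + (b - 1 - d)); last by lia.
  rewrite -f_left; last by lia.
  by rewrite f_period subnK //; lia.
have right_eq : A (d - 1) = ~~ A (n - 1).
  rewrite -f_flip -f_suffixE; last by lia.
  by rewrite [RHS]f_period; [congr f |]; lia.
have [eq_c | lt_c] : c = D + d \/ D + d < c by lia.
  by move: right_eq; rewrite -A2 (_ : d - 1 + D + D = n - 1); [case: (A _) | lia].
have mid : A (c - D - d - 1) = A (c - D - 1).
  rewrite -!f_suffixE; try lia.
  by rewrite f_period; [congr f |]; lia.
move: left_eq; rewrite (_ : n - 1 - d = c - D - d - 1 + D + D); last by lia.
rewrite (_ : n - 1 = c - D - 1 + D + D); last by lia.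
by rewrite !A2 mid; case: (A _).
Qed.

Lemma flip_inside_window : b - 1 < L -> b = d.
Proof.
move=> lt_L; have dD := flip_inside_window_period_eq lt_L.
have Dd : D %| d by rewrite dD.
have := flip_near_start lt_L (dvdnn D) Dd left_period_D.
have := flip_near_end lt_L (dvdnn D) Dd right_period_D.
lia.
Qed.

Lemma flip_at_window_end : b - 1 = L -> forall k, A (k + gcdn D d) = A k.
Proof.
move=> bL; have fD : has_period f D L by rewrite -bL; exact: left_period_D.
have fg : has_period f (gcdn D d) L by apply: fine_wilf fD f_period; lia.
have le_g : gcdn D d <= d := dvdn_leq d_gt0 (dvdn_gcdr D d).
move: (gcdn D d) le_g fg => g le_g fg.
apply: (periodic_window_extend (x := n - b) (m := L)) => [| // | | i lt_i /=]; try lia.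
by rewrite -!f_left; [apply: fg | ..]; lia.
Qed.

Lemma flip_shift_or_period : b = d \/ d < D /\ forall k, A (k + gcdn D d) = A k.
Proof.
have := flip_in_window; rewrite leq_eqVlt => /orP [/eqP bL | lt_L].
  by right; split; [lia | exact: flip_at_window_end].
by left; exact: flip_inside_window.
Qed.

End FlipInRotation.

Theorem corollary1 (n c t1 : nat) (s : seq bool) :
  ceildiv (2 * n - 1) 3 <= c ->
  inB n c (n - c) s ->
  is_add s (n - c) t1 ->
  forall b d2 t2 : nat,
    0 < b -> b < n ->
    inB n c d2 (Rshift b s) ->
    is_add (Rshift b s) d2 t2 ->
    t1 <= t2 ->
    b = d2.
Proof.
move=> c_ge s_in _ b d2 t2 b_gt0 b_lt_n u_in _ _.
have [[_ D_gt0 _] [size_s _ aper_w _]] := s_in.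
have [[_ d2_gt0]] := u_in; rewrite leq_min => /andP [le_d2 _] _.
have [s_period s_break] := inB_window s_in.
have [u_period u_break] := inB_window u_in.
rewrite /ceildiv in c_ge; set D := n - c in D_gt0 le_d2 s_period s_break aper_w.
have nE : n = c + D by rewrite /D; lia.
clearbody D; rewrite {}nE in c_ge b_lt_n size_s.
have {}c_ge : 2 * D <= c + 1 by lia.
pose A x := at_ s (x %% D).
have A_periodic x : A (x + D) = A x by rewrite /A modnDr.
have s_A i : i < c + D - 1 -> at_ s i = A i := has_period_mod s_period.
have s_last : at_ s (c + D - 1) = ~~ A (c + D - 1).
  move: s_break; rewrite (s_A (c - 1)); last by lia.
  rewrite -A_periodic (_ : c - 1 + D = c + D - 1); last by lia.
  by case: (at_ s _); case: (A _).
set u := Rshift b s in u_period u_break.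
have u_rot j : j < c + D ->
    at_ u j = if j < b then at_ s (c + D - b + j) else at_ s (j - b).
  by move=> lt_j; rewrite at_rotr size_s //; lia.
have f_left j : j < b - 1 -> at_ u j = A (c + D - b + j).
  by move=> lt_j; rewrite u_rot ?ifT ?s_A //; lia.
have f_flip : at_ u (b - 1) = ~~ A (c + D - 1).
  by rewrite -s_last u_rot ?ifT; [congr at_ | ..]; lia.
have f_right j : b <= j -> j < c + D -> at_ u j = A (j - b).
  by move=> le_j lt_j; rewrite u_rot // ltnNge le_j /= s_A //; lia.
have [-> // | [lt_dD A_g]] := flip_shift_or_period A_periodic d2_gt0 le_d2 c_ge
  b_gt0 b_lt_n f_left f_flip f_right u_period u_break.
have g_gt0 : 0 < gcdn D d2 by rewrite gcdn_gt0 D_gt0.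
have g_lt_D : gcdn D d2 < D := leq_ltn_trans (dvdn_leq d2_gt0 (dvdn_gcdr D d2)) lt_dD.
have size_w : size (take D s) = D by rewrite size_takel // size_s leq_addl.
case: aper_w; apply: (periodic_of_mod (g := gcdn D d2)); rewrite ?size_w.
- exact: g_gt0.
- exact: g_lt_D.
- exact: dvdn_gcdl.
move=> i lt_i; have lt_ig : i %% gcdn D d2 < D := ltn_trans (ltn_pmod i g_gt0) g_lt_D.
rewrite !nth_take // -/(at_ s i) -/(at_ s (i %% _)) !s_A; try lia.
exact: (has_period_mod (m := i.+1)) (fun j _ => esym (A_g j)) _.
Qed.
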